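(* Let $G$ be a finite group of order greater than $1$ and let $q$ be the smallest prime divisor of $|G|$. If $\mathcal{F}_{pp}(G)=\{1,f\}$ for some integer $f>1$, then $f\geq q$.
   Context: All groups are finite. For a group $G$ and a positive integer $n$ dividing $|G|$, let $F_n(G)=\{g\in G\mid g^n=1\}$. By Frobenius' theorem $|F_n(G)|=f_n\cdot n$ for a positive integer $f_n$, called the Frobenius quotient of $G$ for $n$. ${\rm exp}(G)$ denotes the exponent of $G$. A prime-power divisor of ${\rm exp}(G)$ is a positive divisor $n$ of ${\rm exp}(G)$ of the form $n=p^k$ with $p$ prime and $k\geq 0$ (so $n=1$ is included). $\mathcal{F}_{pp}(G)=\{f_n\mid n \text{ is a prime-power divisor of } {\rm exp}(G)\}$. *)

From mathcomp Require Import all_boot all_fingroup all_solvable.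
Set Implicit Arguments. Unset Strict Implicit. Unset Printing Implicit Defensive.
Local Open Scope group_scope.

Definition Fset (gT : finGroupType) (G : {set gT}) (n : nat) : {set gT} :=
  [set g in G | g ^+ n == 1].

(* Frobenius quotient f_n = |F_n(G)| / n (exact division by Frobenius' theorem
   whenever n divides |G|). *)
Definition frob_quot (gT : finGroupType) (G : {set gT}) (n : nat) : nat :=
  #|Fset G n| %/ n.

Definition is_prime_power (n : nat) : Prop :=
  exists p k, prime p /\ n = (p ^ k)%N.

Definition pp_divisor_exp (gT : finGroupType) (G : {set gT}) (n : nat) : Prop :=
  is_prime_power n /\ (n %| exponent G)%N.

Definition in_Fpp (gT : finGroupType) (G : {set gT}) (m : nat) : Prop :=
  exists n, pp_divisor_exp G n /\ m = frob_quot G n.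

From mathcomp Require Import all_boot all_fingroup all_solvable.
From mathcomp Require Import zify.
Set Implicit Arguments. Unset Strict Implicit. Unset Printing Implicit Defensive.

(* Some f_{p^k} equals f, and f_1 = 1, so along 1, p, ..., p^k there is a
   step where f_{p^j} = 1 and f_{p^(j+1)} = f.  Then G has exactly p^j
   elements of order dividing p^j and f p^(j+1) of order dividing p^(j+1),
   hence (fp - 1) p^j elements of order exactly p^(j+1).  These fall into
   cyclic subgroups, each contributing totient(p^(j+1)) = (p - 1) p^j
   generators, so p - 1 divides fp - 1 = f(p - 1) + (f - 1), i.e. p - 1
   divides f - 1 > 0.  Thus f >= p >= q. *)

Lemma exists_switch (P : pred nat) k :
  ~~ P 0 -> P k -> exists2 j, j < k & ~~ P j && P j.+1.
Proof.
elim: k => [|k IHk] P0 Pk; first by rewrite Pk in P0.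
have [Pk' | nPk'] := boolP (P k); last by exists k; rewrite ?nPk'.
by have [j ltjk Pj] := IHk P0 Pk'; exists j; first exact: ltnW.
Qed.

Lemma predn_mul (p f : nat) : 0 < p -> (f * p).-1 = f * p.-1 + f.-1.
Proof. by move=> p_gt0; nia. Qed.

Lemma dvdn_pfactorS_ndvd p j d :
  prime p -> (d %| p ^ j.+1) && ~~ (d %| p ^ j) = (d == p ^ j.+1).
Proof.
move=> p_pr; apply/idP/eqP => [/andP[dvd_d ndvd_d] | ->]; last first.
  by rewrite dvdnn /= dvdn_Pexp2l ?prime_gt1 // ltnn.
have [i le_ij1 def_d] := dvdn_pfactor _ _ p_pr dvd_d; rewrite def_d in ndvd_d *.
by congr (p ^ _); apply: contraNeq ndvd_d => ne_ij1; apply: dvdn_exp2l; lia.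
Qed.

Section ElementsOfGivenOrder.

Variables (gT : finGroupType) (G : {group gT}).

Lemma totient_dvd_card_order n : totient n %| #|[set x in G | #[x]%g == n]|.
Proof.
rewrite -sum1_card (partition_big_imset (@cycle _)) /=.
apply: dvdn_sum => _ /imsetP[x /[!inE] /andP[Gx /eqP ox] ->].
rewrite (eq_bigl (generator <[x]>)) => [|y].
  by rewrite sum1dep_card -totient_gen ox.
rewrite /generator !inE [<[y]>%g == _]eq_sym.
have [eq_xy|] := eqVneq <[x]>%g <[y]>%g; rewrite ?andbF //.
by rewrite andbT -cycle_subG /order -eq_xy cycle_subG Gx -/(order x) ox eqxx.
Qed.

Lemma card_Fset_pfactorS p j : prime p ->
  #|Fset G (p ^ j.+1)| = #|Fset G (p ^ j)| + #|[set x in G | #[x]%g == p ^ j.+1]|.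
Proof.
move=> p_pr; rewrite -(cardsID (Fset G (p ^ j)) (Fset G (p ^ j.+1))).
congr (_ + _); apply: eq_card => x; rewrite /Fset !inE -!order_dvdn.
  case: (x \in G) => //=; have [dvd_x|] := boolP (#[x]%g %| p ^ j); rewrite ?andbF //.
  by rewrite andbT (dvdn_trans dvd_x) ?dvdn_exp2l.
by case: (x \in G) => //=; rewrite -(dvdn_pfactorS_ndvd _ _ p_pr) andbC.
Qed.

Lemma card_Fset n : n %| #|G| -> #|Fset G n| = frob_quot G n * n.
Proof.
move=> dvd_nG; rewrite /frob_quot divnK //.
by rewrite (_ : Fset G n = 'Ldiv_n(G))%g ?Frobenius_Ldiv //; apply/setP => x; rewrite !inE.
Qed.

Lemma frob_quot1 : frob_quot G 1 = 1.
Proof.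
rewrite /frob_quot divn1 (_ : Fset G 1 = [set 1%g]) ?cards1 //.
by apply/setP => x; rewrite /Fset !inE expg1 andbC; case: eqP => [->|]; rewrite ?group1.
Qed.

Lemma pred_dvd_frob_quot_pfactorS p j : prime p -> p ^ j.+1 %| #|G| ->
  frob_quot G (p ^ j) = 1 -> p.-1 %| (frob_quot G (p ^ j.+1)).-1.
Proof.
move=> p_pr dvd_pj1G fj; set f := frob_quot G (p ^ j.+1).
have p_gt0 := prime_gt0 p_pr.
have dvd_pjG : p ^ j %| #|G| by apply: dvdn_trans dvd_pj1G; rewrite dvdn_exp2l.
have card_order : #|[set x in G | #[x]%g == p ^ j.+1]| = (f * p).-1 * p ^ j.
  have := card_Fset_pfactorS j p_pr.
  rewrite !card_Fset // fj mul1n -/f expnS mulnA => card_eq.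
  by rewrite -subn1 mulnBl mul1n card_eq addKn.
have := totient_dvd_card_order (p ^ j.+1).
rewrite card_order totient_pfactor //= dvdn_pmul2r ?expn_gt0 ?p_gt0 //.
by rewrite predn_mul // dvdn_addr // dvdn_mull.
Qed.

End ElementsOfGivenOrder.

Theorem corollary1p4 (gT : finGroupType) (G : {group gT}) (f : nat) :
  (1 < #|G|)%N ->
  (1 < f)%N ->
  (forall m, in_Fpp G m <-> (m = 1%N \/ m = f)) ->
  (pdiv #|G| <= f)%N.
Proof.
move=> _ f_gt1 Fpp.
have [_ [[[p [k [p_pr ->]]] dvd_pk_exp] def_f]] := (Fpp f).2 (or_intror erefl).
have dvd_pi_exp i : i <= k -> p ^ i %| exponent G.
  by move=> le_ik; apply: dvdn_trans dvd_pk_exp; rewrite dvdn_exp2l.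
have frob_pi i : i <= k -> frob_quot G (p ^ i) = 1 \/ frob_quot G (p ^ i) = f.
  by move=> le_ik; apply/Fpp; exists (p ^ i); do ?split; [exists p, i | exact: dvd_pi_exp].
have := @exists_switch (fun i => frob_quot G (p ^ i) != 1) k.
rewrite /= expn0 frob_quot1 -def_f eqxx gtn_eqF //.
move=> /(_ isT isT) [j lt_jk /andP[/negPn/eqP fj fj1]].
have dvd_pj1G : p ^ j.+1 %| #|G| by rewrite (dvdn_trans (dvd_pi_exp _ lt_jk)) ?exponent_dvdn.
have dvd_p_f : p.-1 %| f.-1.
  have [fj1_eq1 | <-] := frob_pi _ lt_jk; first by rewrite fj1_eq1 eqxx in fj1.
  exact: pred_dvd_frob_quot_pfactorS.
have le_p_f : p <= f.
  by have := dvdn_leq (ltac:(lia) : 0 < f.-1) dvd_p_f; have := prime_gt0 p_pr; lia.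
apply: leq_trans le_p_f.
by rewrite pdiv_min_dvd ?prime_gt1 // (dvdn_trans _ dvd_pj1G) // dvdn_exp.
Qed.
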